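(* Let $1\le l\le r$ and write $I^{[l]}(z)=\sum_{d}I^{[l]}_{d_1,\dots,d_n}z_1^{d_1}\cdots z_n^{d_n}$ with $I^{[l]}_{d_1,\dots,d_n}\in\mathbb{F}_p^n$, the sum over $(d_1,\dots,d_n)\in\mathbb{Z}_{\ge0}^n$. Put $\delta_l=\sum_{j=1}^nM_j-lp$. Then $I^{[l]}_{d_1,\dots,d_n}\ne0$ if and only if $\sum_id_i=\delta_l$ and $d_i\le M_i$ for all $i$; moreover $$I^{[l]}_{d_1,\dots,d_n}=(-1)^{\delta_l}\prod_{j=1}^n\binom{M_j}{d_j}\Big(1-\frac{d_1}{M_1},\dots,1-\frac{d_n}{M_n}\Big),$$ and, writing $I^{[l]}_{d_1,\dots,d_n}=(I_{d;1},\dots,I_{d;n})$, we have $\sum_im_iI_{d;i}=\sum_iM_iI_{d;i}=0$ in $\mathbb{F}_p$.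
   Context: $p,q$ are primes, $n$ a positive integer with $p>n\ge2$, $p>q$; $m_1,\dots,m_n$ are positive integers $<q$, and $M_i$ is the least positive integer with $M_i\equiv -m_iq^{-1}\pmod p$ (in formulas over $\mathbb{F}_p$ its residue). With $\Phi_p(x,z)=\prod_i(x-z_i)^{M_i}$, $I^{[l]}(z)\in\mathbb{F}_p[z_1,\dots,z_n]^n$ is the coefficient of $x^{lp-1}$ in $(\Phi_p/(x-z_1),\dots,\Phi_p/(x-z_n))$, and $r=\lfloor\sum_iM_i/p\rfloor$. *)

From HB Require Import structures.
From mathcomp Require Import all_boot all_order all_algebra.
From mathcomp Require Import mpoly.
Set Implicit Arguments. Unset Strict Implicit. Unset Printing Implicit Defensive.
Import GRing.Theory.
Local Open Scope ring_scope.

Definition Phi (p n : nat) (M : 'I_n -> nat) : {poly {mpoly 'F_p[n]}} :=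
  \prod_(i < n) ('X - ('X_i)%:P) ^+ M i.

(* j-th component of I^{[l]}(z): coefficient of x^{lp-1} in Phi_p/(x - z_j). *)
Definition Icomp (p n : nat) (M : 'I_n -> nat) (l : nat) (j : 'I_n)
  : {mpoly 'F_p[n]} :=
  ((Phi p M) %/ ('X - ('X_j)%:P))`_(l * p - 1).

Definition Icoef (p n : nat) (M : 'I_n -> nat) (l : nat) (d : 'X_{1..n})
  : 'rV['F_p]_n :=
  \row_(j < n) (Icomp p M l j)@_d.

From HB Require Import structures.
From mathcomp Require Import all_boot all_order all_algebra.
From mathcomp Require Import mpoly.
From mathcomp Require Import zify.

(* Phi_p/(x - z_j) is the same product with the exponent of x - z_j lowered by
   one, so the binomial theorem gives its x^(lp-1) z^d coefficient as
   (-1)^|d| prod_i C(M_i - [i = j], d_i) when |d| + lp = sum_i M_i, and 0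
   otherwise.  The identity C(M - 1, d) = C(M, d) (1 - d/M) isolates the
   dependence on j in the factor 1 - d_j/M_j.  Minimality forces M_i < p, so
   M_i and C(M_i, d_i) are units of F_p, which gives the support; finally
   sum_i M_i (1 - d_i/M_i) = sum_i M_i - |d| = lp = 0 in F_p, and
   m_i = -q M_i in F_p. *)
Set Implicit Arguments.
Unset Strict Implicit.
Unset Printing Implicit Defensive.

Import GRing.Theory.
Local Open Scope ring_scope.

Section CoefProdXsubX.
Variables (R : comNzRingType) (n : nat).

(* The common bound B lets all factors of a product be expanded over the same
   index type 'I_B; terms with a > e vanish since 'C(e, a) = 0. *)
Lemma exprXsubC_sum (c : {mpoly R[n]}) (e B : nat) : (e < B)%N ->
  ('X - c%:P) ^+ e =
  \sum_(a < B) (((-1) ^+ a *+ 'C(e, a) : R) *: c ^+ a) *: 'X^(e - a).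
Proof.
move=> lteB; rewrite exprBn.
rewrite (big_ord_widen B (fun a => (-1) ^+ a * 'X ^+ (e - a) * c%:P ^+ a *+ 'C(e, a))) //.
rewrite big_mkcond /=; apply: eq_bigr => a _; case: ifP => [_ | /negbT].
  rewrite -mul_polyC -mul_mpolyC rmorphM /= rmorphMn rmorphXn rmorphN1 /=.
  rewrite rmorphMn rmorphXn rmorphN1 rmorphXn.
  by rewrite !mulrnAl mulrAC.
by rewrite -leqNgt => /bin_small ->; rewrite mulr0n !scale0r.
Qed.

Lemma mcoeff_coef_prod_XsubX (e : 'I_n -> nat) (k : nat) (d : 'X_{1..n}) :
  ((\prod_(i < n) ('X - ('X_i)%:P) ^+ e i : {poly {mpoly R[n]}})`_k)@_d =
  (k == \sum_(i < n) (e i - d i))%N%:R * \prod_(i < n) ((-1) ^+ d i *+ 'C(e i, d i)).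
Proof.
pose B := (\sum_(i < n) e i + \sum_(i < n) d i)%N.+1.
have le_B (x : 'I_n -> nat) i : (x i <= \sum_(j < n) x j)%N.
  by rewrite (bigD1 i) //= leq_addr.
have lt_eB i : (e i < B)%N by rewrite ltnS (leq_trans (le_B e i)) ?leq_addr.
have lt_dB i : (d i < B)%N by rewrite ltnS (leq_trans (le_B d i)) ?leq_addl.
pose fd : {ffun 'I_n -> 'I_B} := [ffun i => Ordinal (lt_dB i)].
pose a (f : {ffun 'I_n -> 'I_B}) : R := \prod_(i < n) ((-1) ^+ f i *+ 'C(e i, f i)).
have mX_prod (f : {ffun 'I_n -> 'I_B}) :
    (\prod_(i < n) ('X_i : {mpoly R[n]}) ^+ f i)@_d = (f == fd)%:R.
  rewrite (eq_bigr (fun i => 'X_i ^+ [multinom (f i : nat) | i < n] i)); last first.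
    by move=> i _; rewrite mnmE.
  rewrite -mpolyXE_id mcoeffX; congr (nat_of_bool _)%:R.
  apply/idP/idP => [/eqP/mnmP eq_fd | /eqP ->].
    by apply/eqP/ffunP => i; apply/val_inj; rewrite ffunE /= -eq_fd mnmE.
  by apply/eqP/mnmP => i; rewrite mnmE ffunE.
have a_fd : a fd = \prod_(i < n) ((-1) ^+ d i *+ 'C(e i, d i)).
  by apply: eq_bigr => i _; rewrite ffunE.
have sum_fd : (\sum_(i < n) (e i - fd i) = \sum_(i < n) (e i - d i))%N.
  by apply: eq_bigr => i _; rewrite ffunE.
rewrite (eq_bigr _ (fun i _ => exprXsubC_sum 'X_i (lt_eB i))) bigA_distr_bigA /=.
under eq_bigr => f _ do rewrite scaler_prod prodrXr scaler_prod.
rewrite coef_sumMXn raddf_sum /=.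
under eq_bigr => f _ do rewrite mcoeffZ mX_prod.
rewrite -a_fd -sum_fd eq_sym; case: (boolP (_ == k)) => [P_fd | nP_fd].
  rewrite (bigD1 fd) ?P_fd //= eqxx mulr1 mul1r [X in _ + X]big1 ?addr0 // => f /andP [_ /negbTE ->].
  by rewrite mulr0.
rewrite mul0r big1 // => f P_f; case: eqP => [eq_f | _]; last by rewrite mulr0.
by rewrite -eq_f P_f in nP_fd.
Qed.
End CoefProdXsubX.

Lemma divp_prod_XsubC_exp (R : idomainType) (n : nat) (c : 'I_n -> R)
    (e : 'I_n -> nat) (j : 'I_n) : (0 < e j)%N ->
  (\prod_(i < n) ('X - (c i)%:P) ^+ e i) %/ ('X - (c j)%:P) =
  \prod_(i < n) ('X - (c i)%:P) ^+ (e i - (i == j)).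
Proof.
move=> e_gt0.
suff -> : \prod_(i < n) ('X - (c i)%:P) ^+ e i =
    \prod_(i < n) ('X - (c i)%:P) ^+ (e i - (i == j)) * ('X - (c j)%:P).
  by rewrite Pdiv.IdomainMonic.mulpK ?monicXsubC.
rewrite [LHS](bigD1 j) // [in RHS](bigD1 j) //= eqxx subn1.
rewrite -mulrA [_ * ('X - _)]mulrC mulrA -exprSr prednK //; congr (_ * _).
by apply: eq_bigr => i /negbTE ->; rewrite subn0.
Qed.

Lemma natr_bin_predn (F : fieldType) (M d : nat) : (M%:R : F) != 0 ->
  'C(M.-1, d)%:R = 'C(M, d)%:R * (1 - d%:R / M%:R) :> F.
Proof.
move=> M_neq0; have [le_dM | lt_Md] := leqP d M; last first.
  by rewrite (bin_small lt_Md) bin_small ?mul0r // (leq_ltn_trans (leq_pred M)).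
apply: (mulfI M_neq0); rewrite -natrM mul_bin_down natrM natrB //.
by rewrite mulrCA mulrBr mulr1 mulrCA divff // mulr1 mulrC.
Qed.

Lemma Fp_natr_neq0 (p a : nat) : prime p -> (0 < a < p)%N -> (a%:R : 'F_p) != 0.
Proof.
by move=> p_pr /andP [a_gt0 lt_ap]; rewrite -(dvdn_pcharf (pchar_Fp p_pr)) gtnNdvd.
Qed.

Lemma Fp_natr_fact_neq0 (p M : nat) : prime p -> (M < p)%N -> (M`!%:R : 'F_p) != 0.
Proof.
move=> p_pr lt_Mp; rewrite fact_prod natr_prod prodf_seq_neq0.
apply/allP => i; rewrite mem_index_iota => /andP [i_gt0 le_iM].
by rewrite Fp_natr_neq0 // i_gt0 (leq_trans le_iM).
Qed.

Lemma Fp_natr_bin_neq0 (p M d : nat) : prime p -> (d <= M < p)%N ->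
  ('C(M, d)%:R : 'F_p) != 0.
Proof.
move=> p_pr /andP [le_dM lt_Mp]; have := Fp_natr_fact_neq0 p_pr lt_Mp.
by apply: contraNneq => bin0; rewrite -(bin_fact le_dM) natrM bin0 mul0r.
Qed.

Lemma least_natr_Fp_lt (p k : nat) (a : 'F_p) : prime p -> a != 0 ->
  k%:R = a -> (forall k', (0 < k')%N -> k'%:R = a -> (k <= k')%N) -> (k < p)%N.
Proof.
move=> p_pr a_neq0 ka k_min; have k_mod : (k %% p)%:R = a by rewrite Fp_nat_mod.
apply: leq_ltn_trans (k_min _ _ k_mod) _; last by rewrite ltn_pmod ?prime_gt0.
by rewrite lt0n; apply: contra_neq a_neq0 => kp0; rewrite -k_mod kp0.
Qed.

Section IcoefFormula.
Variables (p n : nat) (M : 'I_n -> nat) (l : nat).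
Hypotheses (p_pr : prime p) (M_bound : forall i, (0 < M i < p)%N).
Hypotheses (lp_gt0 : (0 < l * p)%N) (le_lp_sumM : (l * p <= \sum_(i < n) M i)%N).

Let M_gt0 i : (0 < M i)%N. Proof. by case/andP: (M_bound i). Qed.
Let M_neq0 i : (M i)%:R != 0 :> 'F_p. Proof. exact: Fp_natr_neq0. Qed.

Lemma IcoefE (d : 'X_{1..n}) :
  Icoef p M l d =
  ((\sum_(i < n) d i + l * p == \sum_(i < n) M i)%N%:R * (-1) ^+ (\sum_(i < n) d i)
     * \prod_(i < n) 'C(M i, d i)%:R) *: \row_(i < n) (1 - (d i)%:R / (M i)%:R).
Proof.
apply/rowP => j; pose e i := (M i - (i == j))%N.
rewrite !mxE /Icomp /Phi divp_prod_XsubC_exp // (@mcoeff_coef_prod_XsubX _ _ e).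
have sum_e : (\sum_(i < n) e i = \sum_(i < n) M i - 1)%N.
  rewrite sumnB => [|i _]; last by case: eqP => // ->.
  by rewrite [X in (_ - X)%N](bigD1 j) //= eqxx [X in (1 + X)%N]big1 // => i /negbTE ->.
have ind_e : ((l * p - 1 == \sum_(i < n) (e i - d i))%N%:R
              * \prod_(i < n) ((-1) ^+ d i *+ 'C(e i, d i)) : 'F_p) =
             (\sum_(i < n) d i + l * p == \sum_(i < n) M i)%N%:R
              * \prod_(i < n) ((-1) ^+ d i *+ 'C(e i, d i)).
  have [/forallP le_de | /forallPn [i /negbTE lt_ed]] := boolP [forall i, d i <= e i]%N.
    have le_sum : (\sum_(i < n) d i <= \sum_(i < n) e i)%N by exact: leq_sum.
    have sum_ed : (\sum_(i < n) (e i - d i) = \sum_(i < n) e i - \sum_(i < n) d i)%N.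
      exact: sumnB.
    rewrite sum_e in le_sum sum_ed; rewrite sum_ed; congr ((nat_of_bool _)%:R * _).
    by apply/eqP/eqP; lia.
  by rewrite [\prod_(k < n) _](bigD1 i) //= bin_small ?ltnNge ?lt_ed // mulr0n mul0r !mulr0.
rewrite ind_e -mulrA -[in RHS]mulrA; congr (_ * _).
rewrite (eq_bigr (fun i => (-1) ^+ d i * 'C(e i, d i)%:R)) => [|i _]; last by rewrite mulr_natr.
rewrite big_split /= prodrXr; congr (_ * _).
rewrite (bigD1 j) //= [in RHS](bigD1 j) //= /e eqxx subn1 natr_bin_predn //.
rewrite (eq_bigr (fun i => 'C(M i, d i)%:R)) => [|i /negbTE ji]; last by rewrite ji subn0.
by rewrite mulrAC.
Qed.

Lemma Icoef_on_support (d : 'X_{1..n}) :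
  (\sum_(i < n) d i = \sum_(i < n) M i - l * p)%N ->
  Icoef p M l d =
  ((-1) ^+ (\sum_(i < n) M i - l * p) * \prod_(i < n) 'C(M i, d i)%:R)
    *: \row_(i < n) (1 - (d i)%:R / (M i)%:R).
Proof.
move=> sum_d; rewrite IcoefE -sum_d.
have -> : (\sum_(i < n) d i + l * p == \sum_(i < n) M i)%N by apply/eqP; lia.
by rewrite mul1r.
Qed.

Lemma Icoef_neq0 (d : 'X_{1..n}) :
  Icoef p M l d != 0 <->
  (\sum_(i < n) d i = \sum_(i < n) M i - l * p)%N /\ (forall i, d i <= M i)%N.
Proof.
split=> [|[sum_d le_dM]].
  rewrite IcoefE scaler_eq0 negb_or => /andP [+ _].
  rewrite !mulf_eq0 !negb_or => /andP [/andP [ind_neq0 _] /prodf_neq0 bin_neq0]; split.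
    have /eqP : (\sum_(i < n) d i + l * p == \sum_(i < n) M i)%N.
      by apply: contraNT ind_neq0 => /negbTE ->.
    lia.
  by move=> i; rewrite leqNgt; apply: contra (bin_neq0 i isT) => /bin_small ->.
have [i lt_dM] : exists i, (d i < M i)%N.
  apply/existsP; apply: contraTT lp_gt0 => /existsPn le_Md.
  have : (\sum_(i < n) M i <= \sum_(i < n) d i)%N by apply: leq_sum => i _; rewrite leqNgt le_Md.
  by rewrite sum_d; lia.
rewrite Icoef_on_support // scaler_eq0 negb_or mulf_eq0 negb_or signr_eq0 /=.
apply/andP; split.
  by apply/prodf_neq0 => k _; rewrite Fp_natr_bin_neq0 // le_dM; case/andP: (M_bound k).
apply/eqP => /rowP /(_ i); rewrite !mxE; apply/eqP.
rewrite -{1}(divff (M_neq0 i)) -mulrBl -natrB ?(ltnW lt_dM) // mulf_neq0 ?invr_eq0 //.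
by rewrite Fp_natr_neq0 // subn_gt0 lt_dM (leq_ltn_trans (leq_subr _ _)) //; case/andP: (M_bound i).
Qed.

Lemma Icoef_dot_M (d : 'X_{1..n}) :
  \sum_(i < n) (M i)%:R * Icoef p M l d ord0 i = 0.
Proof.
rewrite IcoefE; set s := (_ * _ * _).
have -> : \sum_(i < n) (M i)%:R * (s *: \row_(i < n) (1 - (d i)%:R / (M i)%:R)) ord0 i =
          s * ((\sum_(i < n) M i)%:R - (\sum_(i < n) d i)%:R).
  rewrite !natr_sum -sumrB mulr_sumr; apply: eq_bigr => i _; rewrite !mxE.
  by rewrite mulrCA mulrBr mulr1 mulrCA divff ?mulr1.
rewrite /s; case: eqP => [sum_dM | _]; last by rewrite !mul0r.
by rewrite -sum_dM natrD addrAC subrr add0r natrM pchar_Fp_0 // !mulr0.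
Qed.
End IcoefFormula.

Theorem lemma3p1 (p q n : nat) (m M : 'I_n -> nat) (l : nat) :
  prime p -> prime q -> (2 <= n)%N -> (n < p)%N -> (q < p)%N ->
  (forall i, 0 < m i < q)%N ->
  (* M_i is the least positive integer with M_i = -m_i q^{-1} (mod p) *)
  (forall i, (0 < M i)%N /\
     ((M i)%:R = - (m i)%:R / q%:R :> 'F_p) /\
     (forall k : nat, (0 < k)%N -> (k%:R = - (m i)%:R / q%:R :> 'F_p) ->
        (M i <= k)%N)) ->
  let r := ((\sum_(i < n) M i) %/ p)%N in
  let delta := ((\sum_(i < n) M i) - l * p)%N in
  (1 <= l <= r)%N ->
  forall d : 'X_{1..n},
    (Icoef p M l d != 0 <->
       ((\sum_(i < n) d i)%N = delta /\ forall i, (d i <= M i)%N)) /\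
    (((\sum_(i < n) d i)%N = delta /\ forall i, (d i <= M i)%N) ->
       Icoef p M l d =
         ((-1) ^+ delta * \prod_(j < n) ('C(M j, d j))%:R) *:
           \row_(i < n) (1 - (d i)%:R / (M i)%:R : 'F_p)) /\
    (\sum_(i < n) (m i)%:R * Icoef p M l d ord0 i = 0 :> 'F_p) /\
    (\sum_(i < n) (M i)%:R * Icoef p M l d ord0 i = 0 :> 'F_p).
Proof.
move=> p_pr q_pr _ _ lt_qp m_bound M_least r delta /andP [l_gt0 le_lr] d.
have p_gt0 := prime_gt0 p_pr.
have q_neq0 : q%:R != 0 :> 'F_p by rewrite Fp_natr_neq0 // prime_gt0.
have M_eq i : (M i)%:R = - (m i)%:R / q%:R :> 'F_p by case: (M_least i) => _ [].
have M_bound i : (0 < M i < p)%N.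
  have [M_gt0 [Mi_eq Mi_min]] := M_least i; rewrite M_gt0 (least_natr_Fp_lt p_pr _ Mi_eq Mi_min) //.
  have /andP [m_gt0 lt_mq] := m_bound i.
  by rewrite mulf_neq0 ?oppr_eq0 ?invr_eq0 // Fp_natr_neq0 // m_gt0 (ltn_trans lt_mq).
have lp_gt0 : (0 < l * p)%N by rewrite muln_gt0 l_gt0.
have le_lp_sumM : (l * p <= \sum_(i < n) M i)%N by rewrite -leq_divRL.
have dot_M := Icoef_dot_M p_pr M_bound lp_gt0 le_lp_sumM d.
split; first exact: Icoef_neq0.
split; first by case=> sum_d _; apply: Icoef_on_support.
split=> //; transitivity (- q%:R * \sum_(i < n) (M i)%:R * Icoef p M l d ord0 i).
  rewrite mulr_sumr; apply: eq_bigr => i _; rewrite M_eq mulrA; congr (_ * _).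
  by rewrite !mulNr mulrN opprK mulrCA divff ?mulr1.
by rewrite dot_M mulr0.
Qed.
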